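(* Let $S$ be a finite state space, $P$ a row-stochastic $|S|\times|S|$ matrix (the transition matrix induced by a target policy $\pi$), $\beta\in(0,1)$, $d_\mu$ a probability vector on $S$ (the stationary distribution of a behavior policy $\mu$), and $f^\top=d_\mu^\top(I-\beta P)^{-1}$, assumed to satisfy $f(s)>0$ for all $s$. Let $\kappa=\min_s \frac{d_\mu(s)}{f(s)}$. Then $0\le\kappa\le 1-\beta$. Moreover, $\kappa=0$ when there is a state visited by the target policy but not by the behavior policy (i.e. a state $s$ with $d_\mu(s)=0$ and $[d_\mu^\top P^t](s)>0$ for some $t\ge 0$), and $\kappa=1-\beta$ when the two policies are identical (so that $d_\mu$ equals the stationary distribution $d_\pi$ of $P$, i.e. $d_\mu^\top P=d_\mu^\top$).
   Context: $d_\pi$ denotes the stationary distribution over states induced by the target policy, i.e. a probability vector with $d_\pi^\top P=d_\pi^\top$. *)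

(* State space S = 'I_n.+1 (finite, nonempty so that the min exists). *)
From HB Require Import structures.
From mathcomp Require Import all_boot all_order all_algebra.
Set Implicit Arguments. Unset Strict Implicit. Unset Printing Implicit Defensive.
Import Order.TTheory GRing.Theory Num.Theory.
Local Open Scope ring_scope.

Definition row_stochastic (R : numDomainType) (n : nat) (P : 'M[R]_n) : Prop :=
  (forall i j, 0 <= P i j) /\ (forall i, \sum_j P i j = 1).

Definition prob_vec (R : numDomainType) (n : nat) (d : 'rV[R]_n) : Prop :=
  (forall s, 0 <= d 0 s) /\ \sum_s d 0 s = 1.

Definition fvec (R : fieldType) (n : nat) (P : 'M[R]_n.+1) (beta : R)
  (d : 'rV[R]_n.+1) : 'rV[R]_n.+1 :=
  d *m invmx (1%:M - beta *: P).

Definition kappa (R : realFieldType) (n : nat) (P : 'M[R]_n.+1) (beta : R)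
  (d : 'rV[R]_n.+1) : R :=
  let f := fvec P beta d in
  \big[Num.min/ (d 0 ord0 / f 0 ord0)]_(s : 'I_n.+1) (d 0 s / f 0 s).

From HB Require Import structures.
From mathcomp Require Import all_boot all_order all_algebra.
Import Order.TTheory GRing.Theory Num.Theory.
Local Open Scope ring_scope.

(* Right multiplication by a stochastic matrix preserves the total mass of a
   row vector and does not increase its l1 norm.  Hence [I - beta P] is
   invertible, and summing [f (I - beta P) = d] gives
   [(1 - beta) * sum f = sum d]: the ratios [d s / f s] cannot all exceed
   [1 - beta].  For a stationary [d] one has [f = d / (1 - beta)] exactly. *)

Lemma row_stochastic_sum_mulmx {R : numDomainType} {n : nat} {P : 'M[R]_n}
    (v : 'rV[R]_n) :
  row_stochastic P -> \sum_j (v *m P) 0 j = \sum_i v 0 i.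
Proof.
case=> _ P1; rewrite (eq_bigr _ (fun j _ => mxE _ _ _ _)) /= exchange_big /=.
by apply: eq_bigr => i _; rewrite -mulr_sumr P1 mulr1.
Qed.

Lemma row_stochastic_norm_mulmx {R : numDomainType} {n : nat} {P : 'M[R]_n}
    (v : 'rV[R]_n) :
  row_stochastic P -> \sum_j `|(v *m P) 0 j| <= \sum_i `|v 0 i|.
Proof.
move=> [P0 P1]; have -> : \sum_i `|v 0 i| = \sum_j \sum_i `|v 0 i| * P i j.
  by rewrite exchange_big; apply: eq_bigr => i _; rewrite -mulr_sumr P1 mulr1.
apply: ler_sum => j _; rewrite mxE; apply: (le_trans (ler_norm_sum _ _ _)).
by apply: ler_sum => i _; rewrite normrM (ger0_norm (P0 i j)).
Qed.

Section Discounted.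

Context {R : realFieldType} {n : nat} (P : 'M[R]_n.+1) (beta : R).
Hypotheses (HP : row_stochastic P) (beta_ge0 : 0 <= beta) (beta_lt1 : beta < 1).

Let A := 1%:M - beta *: P.

Lemma mulmx_discount (v : 'rV[R]_n.+1) : v *m A = v - beta *: (v *m P).
Proof. by rewrite mulmxBr mulmx1 scalemxAr. Qed.

Lemma discount_unitmx : A \in unitmx.
Proof.
rewrite -row_free_unit; apply: inj_row_free => v vA0.
have v_fix : v = beta *: (v *m P).
  by apply/eqP; rewrite -subr_eq0 -mulmx_discount vA0.
set S := \sum_i `|v 0 i|.
have S_ge0 : 0 <= S by apply: sumr_ge0 => i _.
have S_contract : S <= beta * S.
  rewrite {1}/S v_fix; under eq_bigr do rewrite mxE normrM (ger0_norm beta_ge0).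
  by rewrite -mulr_sumr ler_wpM2l // row_stochastic_norm_mulmx.
have S0 : S = 0.
  apply/eqP; rewrite eq_le S_ge0 andbT.
  have : (1 - beta) * S <= 0 by rewrite mulrBl mul1r subr_le0.
  by rewrite pmulr_rle0 // subr_gt0.
apply/rowP => i; rewrite mxE; apply/eqP; rewrite -normr_eq0.
by move/eqP: S0; rewrite psumr_eq0 // => /allP/(_ i (mem_index_enum _)).
Qed.

Lemma fvecK (d : 'rV[R]_n.+1) : fvec P beta d *m A = d.
Proof. by rewrite /fvec mulmxKV // discount_unitmx. Qed.

Lemma sum_fvec (d : 'rV[R]_n.+1) :
  (1 - beta) * \sum_s fvec P beta d 0 s = \sum_s d 0 s.
Proof.
rewrite -{2}(fvecK d) mulmx_discount; set f := fvec P beta d.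
rewrite [RHS](eq_bigr (fun s => f 0 s - beta * (f *m P) 0 s)) => [|s _]; last first.
  by rewrite [LHS]mxE; congr (_ + _); rewrite !mxE.
by rewrite sumrB -mulr_sumr (row_stochastic_sum_mulmx f HP) mulrBl mul1r.
Qed.

Lemma fvec_stationary (d : 'rV[R]_n.+1) :
  d *m P = d -> fvec P beta d = (1 - beta)^-1 *: d.
Proof.
move=> dP; have dA : d *m A = (1 - beta) *: d.
  by rewrite mulmx_discount dP scalerBl scale1r.
have nz : 1 - beta != 0 by rewrite subr_eq0 eq_sym lt_eqF.
by rewrite /fvec -{1}[d](scalerK nz) -dA -scalemxAl mulmxK // discount_unitmx.
Qed.

End Discounted.

Section Kappa.

Context {R : realFieldType} {n : nat} (P : 'M[R]_n.+1) (beta : R)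
  (d : 'rV[R]_n.+1).

Lemma kappa_le_ratio s : kappa P beta d <= d 0 s / fvec P beta d 0 s.
Proof. exact: bigmin_le. Qed.

Lemma le_kappa c :
  (forall s, c <= d 0 s / fvec P beta d 0 s) -> c <= kappa P beta d.
Proof. by move=> c_le; apply: le_bigmin. Qed.

Hypotheses (HP : row_stochastic P) (beta_ge0 : 0 <= beta) (beta_lt1 : beta < 1).
Hypothesis f_gt0 : forall s, 0 < fvec P beta d 0 s.

Lemma kappa_le_discount : kappa P beta d <= 1 - beta.
Proof.
rewrite leNgt; apply/negP => lt_kappa.
have lt_d s : (1 - beta) * fvec P beta d 0 s < d 0 s.
  by rewrite -ltr_pdivlMr // (lt_le_trans lt_kappa (kappa_le_ratio s)).
have nonempty : has predT (index_enum 'I_n.+1) by apply/hasP; exists ord0.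
by have := ltr_sum nonempty (fun s _ => lt_d s); rewrite -mulr_sumr sum_fvec // ltxx.
Qed.

Lemma kappa_stationary : d *m P = d -> kappa P beta d = 1 - beta.
Proof.
move=> dP; apply/eqP; rewrite eq_le kappa_le_discount /=.
apply: le_kappa => s.
have ds_neq0 : d 0 s != 0.
  have := f_gt0 s; rewrite fvec_stationary // mxE.
  by rewrite pmulr_rgt0 ?invr_gt0 ?subr_gt0 // => /lt0r_neq0.
by rewrite fvec_stationary // mxE invfM invrK mulrCA divff ?mulr1.
Qed.

End Kappa.

Theorem lemma1 (R : realFieldType) (n : nat) (P : 'M[R]_n.+1) (beta : R)
  (d_mu : 'rV[R]_n.+1)
  (HP : row_stochastic P) (Hbeta0 : 0 < beta) (Hbeta1 : beta < 1)
  (Hd : prob_vec d_mu)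
  (Hf : forall s, 0 < (fvec P beta d_mu) 0 s) :
  0 <= kappa P beta d_mu /\ kappa P beta d_mu <= 1 - beta /\
  ((exists (s : 'I_n.+1) (t : nat), d_mu 0 s = 0 /\ 0 < (d_mu *m P ^+ t) 0 s) ->
     kappa P beta d_mu = 0) /\
  (d_mu *m P = d_mu -> kappa P beta d_mu = 1 - beta).
Proof.
have beta_ge0 := ltW Hbeta0; case: Hd => d_ge0 _.
have kappa_ge0 : 0 <= kappa P beta d_mu.
  by apply: le_kappa => s; rewrite divr_ge0 // ltW.
split=> //; split; first exact: kappa_le_discount.
split; last exact: kappa_stationary.
(* Only [d_mu s = 0] matters. *)
case=> s [_ [d_s0 _]]; apply/eqP; rewrite eq_le kappa_ge0 andbT.
by have := kappa_le_ratio P beta d_mu s; rewrite d_s0 mul0r.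
Qed.
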